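(* For any polynomial monad $(t,\eta,\mu)$, the $\mathbf{Cat}^\sharp$-enriched category $\mathbf{Dyn}_t$ has (enriched) coproducts: for any sets $A,B$ there are morphisms $i\colon\mathcal{y}\to\mathfrak{c}_{h^t_{A,A+B}}$ and $j\colon\mathcal{y}\to\mathfrak{c}_{h^t_{B,A+B}}$ in $\mathbf{Cat}^\sharp$ such that for every set $C$, every $v\in\mathbf{Cat}^\sharp$ and every pair of $\mathbf{Cat}^\sharp$-maps $f\colon v\to\mathfrak{c}_{h^t_{A,C}}$, $g\colon v\to\mathfrak{c}_{h^t_{B,C}}$, there is a unique $\mathbf{Cat}^\sharp$-map $(f,g)\colon v\to\mathfrak{c}_{h^t_{A+B,C}}$ such that the composite $v\cong\mathcal{y}\otimes v\xrightarrow{i\otimes(f,g)}\mathfrak{c}_{h^t_{A,A+B}}\otimes\mathfrak{c}_{h^t_{A+B,C}}\xrightarrow{\ ;\ }\mathfrak{c}_{h^t_{A,C}}$ equals $f$ and the composite $v\cong\mathcal{y}\otimes v\xrightarrow{j\otimes(f,g)}\mathfrak{c}_{h^t_{B,A+B}}\otimes\mathfrak{c}_{h^t_{A+B,C}}\xrightarrow{\ ;\ }\mathfrak{c}_{h^t_{B,C}}$ equals $g$, where $;$ denotes the composition of $\mathbf{Dyn}_t$.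
   Context: $\mathbf{Poly}$ is the category of polynomial functors on $\mathbf{Set}$; $\triangleleft$ is composition, $\otimes$ the Dirichlet product (unit $\mathcal{y}$), $[-,-]$ the internal hom for $\otimes$, and $A\mathcal{y}=\sum_{a\in A}\mathcal{y}$ for a set $A$. A polynomial monad is a $\triangleleft$-monoid $(t,\eta,\mu)$ in $\mathbf{Poly}$. $\mathbf{Cat}^\sharp$ is the category of $\triangleleft$-comonoids in $\mathbf{Poly}$ (equivalently categories and cofunctors), monoidal under $\otimes$; $\mathfrak{c}_{-}\colon\mathbf{Poly}\to\mathbf{Cat}^\sharp$ is the cofree comonoid functor, right adjoint to the forgetful functor, and lax monoidal. Put $h^t_{A,B}:=[A\mathcal{y},t\triangleleft B\mathcal{y}]$. $\mathbf{Dyn}_t$ is the $\mathbf{Cat}^\sharp$-enriched category with objects sets and hom-objects $\mathfrak{c}_{h^t_{A,B}}$, with identities and composition $\mathfrak{c}_{h^t_{A,B}}\otimes\mathfrak{c}_{h^t_{B,C}}\to\mathfrak{c}_{h^t_{A,C}}$ induced, via the lax monoidal structure of $\mathfrak{c}_{-}$, from the $\mathbf{Poly}$-enriched structure on the $h^t_{A,B}$ (identity from $\eta$, composition from evaluation, the duoidal map $(t\triangleleft B\mathcal{y})\otimes(\mathcal{y}\triangleleft h)\to(t\otimes\mathcal{y})\triangleleft(B\mathcal{y}\otimes h)$, and $\mu$). *)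

From Stdlib Require Import List ProofIrrelevance FunctionalExtensionality
  ClassicalEpsilon Eqdep.
Import ListNotations.

(* p = sum_{i : pos p} y^{dir p i} *)
Record poly : Type := Poly { pos : Type ; dir : pos -> Type }.

Record pmor (p q : poly) : Type := PMor {
  onpos : pos p -> pos q ;
  ondir : forall i : pos p, dir q (onpos i) -> dir p i }.
Arguments PMor {p q} _ _.
Arguments onpos {p q} _ _.
Arguments ondir {p q} _ _ _.

Definition pid (p : poly) : pmor p p := PMor (fun i => i) (fun i d => d).

Definition pcomp {p q r : poly} (g : pmor q r) (f : pmor p q) : pmor p r :=
  PMor (fun i => onpos g (onpos f i))
       (fun i d => ondir f i (ondir g (onpos f i) d)).

Definition yy : poly := Poly unit (fun _ => unit).
Definition lin (A : Type) : poly := Poly A (fun _ => unit).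

Definition tri (p q : poly) : poly :=
  Poly {i : pos p & dir p i -> pos q}
       (fun x => {d : dir p (projT1 x) & dir q (projT2 x d)}).

Definition tens (p q : poly) : poly :=
  Poly (pos p * pos q) (fun x => (dir p (fst x) * dir q (snd x))%type).

Definition ihom (p q : poly) : poly :=
  Poly (pmor p q) (fun f => {i : pos p & dir q (onpos f i)}).

Definition tri_map {p p' q q' : poly} (f : pmor p p') (g : pmor q q')
  : pmor (tri p q) (tri p' q') :=
  @PMor (tri p q) (tri p' q')
    (fun x => existT (fun i' => dir p' i' -> pos q') (onpos f (projT1 x))
                (fun d' => onpos g (projT2 x (ondir f (projT1 x) d'))))
    (fun x e => existT (fun d => dir q (projT2 x d))
                  (ondir f (projT1 x) (projT1 e))
                  (ondir g (projT2 x (ondir f (projT1 x) (projT1 e))) (projT2 e))).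

Definition tens_map {p p' q q' : poly} (f : pmor p p') (g : pmor q q')
  : pmor (tens p q) (tens p' q') :=
  @PMor (tens p q) (tens p' q')
    (fun x => (onpos f (fst x), onpos g (snd x)))
    (fun x e => (ondir f (fst x) (fst e), ondir g (snd x) (snd e))).

Definition lamI (p : poly) : pmor p (tri yy p) :=
  @PMor p (tri yy p) (fun i => existT (fun _ : unit => unit -> pos p) tt (fun _ => i))
    (fun i e => projT2 e).

Definition rhoI (p : poly) : pmor p (tri p yy) :=
  @PMor p (tri p yy) (fun i => existT (fun i => dir p i -> unit) i (fun _ => tt))
    (fun i e => projT1 e).

Definition assoc (p q r : poly) : pmor (tri (tri p q) r) (tri p (tri q r)) :=
  @PMor (tri (tri p q) r) (tri p (tri q r))
    (fun X => existT (fun i => dir p i -> pos (tri q r)) (projT1 (projT1 X))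
       (fun d => existT (fun j : pos q => dir q j -> pos r) (projT2 (projT1 X) d)
                   (fun e => projT2 X (existT _ d e))))
    (fun X w => existT (fun de => dir r (projT2 X de))
                  (existT (fun d => dir q (projT2 (projT1 X) d)) (projT1 w) (projT1 (projT2 w)))
                  (projT2 (projT2 w))).

Definition assocI (p q r : poly) : pmor (tri p (tri q r)) (tri (tri p q) r) :=
  @PMor (tri p (tri q r)) (tri (tri p q) r)
    (fun X => existT (fun x : pos (tri p q) => dir (tri p q) x -> pos r)
       (existT (fun i => dir p i -> pos q) (projT1 X) (fun d => projT1 (projT2 X d)))
       (fun de => projT2 (projT2 X (projT1 de)) (projT2 de)))
    (fun X w => existT (fun d => dir (tri q r) (projT2 X d)) (projT1 (projT1 w))
        (existT (fun e => dir r (projT2 (projT2 X (projT1 (projT1 w))) e))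
           (projT2 (projT1 w)) (projT2 w))).

Definition unitL (p : poly) : pmor p (tens yy p) :=
  @PMor p (tens yy p) (fun i => (tt, i)) (fun i e => snd e).

Definition runit (p : poly) : pmor (tens p yy) p :=
  @PMor (tens p yy) p (fun x => fst x) (fun x d => (d, tt)).

Definition tsym (p q : poly) : pmor (tens p q) (tens q p) :=
  @PMor (tens p q) (tens q p) (fun x => (snd x, fst x)) (fun x e => (snd e, fst e)).

Definition rearr (a b c : poly) : pmor (tens (tens a b) c) (tens (tens a c) b) :=
  @PMor (tens (tens a b) c) (tens (tens a c) b)
    (fun x => ((fst (fst x), snd x), snd (fst x)))
    (fun x e => ((fst (fst e), snd e), snd (fst e))).

Definition duo (p q p' q' : poly)
  : pmor (tens (tri p q) (tri p' q')) (tri (tens p p') (tens q q')) :=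
  @PMor (tens (tri p q) (tri p' q')) (tri (tens p p') (tens q q'))
    (fun X => existT (fun ii : pos (tens p p') => dir (tens p p') ii -> pos (tens q q'))
       (projT1 (fst X), projT1 (snd X))
       (fun dd => (projT2 (fst X) (fst dd), projT2 (snd X) (snd dd))))
    (fun X w => (existT (fun d => dir q (projT2 (fst X) d)) (fst (projT1 w)) (fst (projT2 w)),
                 existT (fun d => dir q' (projT2 (snd X) d)) (snd (projT1 w)) (snd (projT2 w)))).

Definition ev (p q : poly) : pmor (tens (ihom p q) p) q :=
  @PMor (tens (ihom p q) p) q
    (fun x => onpos (fst x) (snd x))
    (fun x e => (existT (fun i => dir q (onpos (fst x) i)) (snd x) e,
                 ondir (fst x) (snd x) e)).

Definition curry {r p q : poly} (m : pmor (tens r p) q) : pmor r (ihom p q) :=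
  @PMor r (ihom p q)
    (fun x => @PMor p q (fun i => onpos m (x, i)) (fun i e => snd (ondir m (x, i) e)))
    (fun x w => fst (ondir m (x, projT1 w) (projT2 w))).

Definition is_monad (t : poly) (eta : pmor yy t) (mu : pmor (tri t t) t) : Prop :=
  pcomp mu (pcomp (tri_map eta (pid t)) (lamI t)) = pid t /\
  pcomp mu (pcomp (tri_map (pid t) eta) (rhoI t)) = pid t /\
  pcomp mu (tri_map mu (pid t)) = pcomp mu (pcomp (tri_map (pid t) mu) (assoc t t t)).

Record comon : Type := Comon {
  carrier : poly ;
  eps : pmor carrier yy ;
  dlt : pmor carrier (tri carrier carrier) }.

Definition is_comonoid (c : comon) : Prop :=
  pcomp (tri_map (eps c) (pid (carrier c))) (dlt c) = lamI (carrier c) /\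
  pcomp (tri_map (pid (carrier c)) (eps c)) (dlt c) = rhoI (carrier c) /\
  pcomp (assoc _ _ _) (pcomp (tri_map (dlt c) (pid (carrier c))) (dlt c))
    = pcomp (tri_map (pid (carrier c)) (dlt c)) (dlt c).

Definition is_cofunctor (c d : comon) (f : pmor (carrier c) (carrier d)) : Prop :=
  pcomp (eps d) f = eps c /\ pcomp (dlt d) f = pcomp (tri_map f f) (dlt c).

Definition yyC : comon := Comon yy (pid yy) (lamI yy).

(* A p-tree is described by its set of labelled vertices: T s i means that
   the vertex reached from the root by the path s (a list of steps
   (label, chosen direction)) exists and is labelled i. *)
Definition step (p : poly) : Type := {i : pos p & dir p i}.

Definition is_ptree (p : poly) (T : list (step p) -> pos p -> Prop) : Prop :=
  (exists i, T nil i) /\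
  (forall s i i', T s i -> T s i' -> i = i') /\
  (forall s i (d : dir p i), T s i -> exists j, T (s ++ [existT _ i d]) j) /\
  (forall s x j, T (s ++ [x]) j -> T s (projT1 x)).

Definition ptree (p : poly) : Type :=
  {T : list (step p) -> pos p -> Prop | is_ptree p T}.

Definition tvertex (p : poly) (T : ptree p) : Type :=
  {s : list (step p) | exists i, proj1_sig T s i}.

Definition cofree (p : poly) : poly := Poly (ptree p) (tvertex p).

Definition ceps (p : poly) : pmor (cofree p) yy :=
  @PMor (cofree p) yy (fun _ => tt)
    (fun T _ => exist _ nil (proj1 (proj2_sig T))).

Lemma subtree_wf (p : poly) (T : ptree p) (s : list (step p)) :
  (exists i, proj1_sig T s i) -> is_ptree p (fun u j => proj1_sig T (s ++ u) j).
Proof.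
  destruct T as [T [Hr [Hf [Hc Hp]]]]; simpl; intros [i0 Hi0].
  split; [|split; [|split]].
  - exists i0. now rewrite app_nil_r.
  - intros u i i'. apply Hf.
  - intros u i d H. destruct (Hc _ _ d H) as [j Hj]. exists j.
    now rewrite app_assoc.
  - intros u x j H. apply (Hp (s ++ u) x j). now rewrite <- app_assoc.
Qed.

Definition subtree (p : poly) (T : ptree p) (a : tvertex p T) : ptree p :=
  exist _ _ (subtree_wf p T (proj1_sig a) (proj2_sig a)).

Definition cdlt (p : poly) : pmor (cofree p) (tri (cofree p) (cofree p)) :=
  @PMor (cofree p) (tri (cofree p) (cofree p))
    (fun T => existT (fun T => tvertex p T -> ptree p) T (subtree p T))
    (fun T w => exist (fun s => exists i, proj1_sig T s i)
                  (proj1_sig (projT1 w) ++ proj1_sig (projT2 w))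
                  (proj2_sig (projT2 w))).

Definition cofreeC (p : poly) : comon := Comon (cofree p) (ceps p) (cdlt p).

Definition rel_step {p q : poly} (phi : pmor p q) (x : step p) (y : step q) : Prop :=
  exists e : dir q (onpos phi (projT1 x)),
    y = existT _ (onpos phi (projT1 x)) e /\ projT2 x = ondir phi (projT1 x) e.

Definition relab_pred {p q : poly} (phi : pmor p q) (T : ptree p)
  : list (step q) -> pos q -> Prop :=
  fun s' j' => exists s j, proj1_sig T s j /\ Forall2 (rel_step phi) s s'
                           /\ j' = onpos phi j.

Lemma relab_addr_uniq {p q : poly} (phi : pmor p q) (T : ptree p) :
  forall s' s1 s2 j1 j2, proj1_sig T s1 j1 -> proj1_sig T s2 j2 ->
  Forall2 (rel_step phi) s1 s' -> Forall2 (rel_step phi) s2 s' -> s1 = s2.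
Proof.
  destruct T as [T [Hr [Hf [Hc Hp]]]]; simpl.
  induction s' as [|y s' IH] using rev_ind.
  - intros s1 s2 j1 j2 _ _ H1 H2. inversion H1. inversion H2. reflexivity.
  - intros s1 s2 j1 j2 T1 T2 H1 H2.
    apply Forall2_app_inv_r in H1 as [l1 [l1' [F1 [F1' ->]]]].
    apply Forall2_app_inv_r in H2 as [l2 [l2' [F2 [F2' ->]]]].
    inversion F1' as [|x1 y1 m1 m1' R1 N1]; subst. inversion N1; subst.
    inversion F2' as [|x2 y2 m2 m2' R2 N2]; subst. inversion N2; subst.
    pose proof (Hp _ _ _ T1) as P1. pose proof (Hp _ _ _ T2) as P2.
    assert (l1 = l2) by (eapply IH; eauto). subst l2.
    pose proof (Hf _ _ _ P1 P2) as Ei.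
    destruct x1 as [i1 d1], x2 as [i2 d2]; simpl in *. subst i2.
    destruct R1 as [e1 [Ey1 Ed1]], R2 as [e2 [Ey2 Ed2]]. simpl in *.
    rewrite Ey1 in Ey2. apply inj_pair2 in Ey2. subst. reflexivity.
Qed.

Lemma relab_wf {p q : poly} (phi : pmor p q) (T : ptree p) :
  is_ptree q (relab_pred phi T).
Proof.
  pose proof (relab_addr_uniq phi T) as U.
  destruct T as [T [Hr [Hf [Hc Hp]]]]; simpl in *; unfold relab_pred; simpl.
  split; [|split; [|split]].
  - destruct Hr as [i Hi]. exists (onpos phi i), nil, i. auto.
  - intros s' i i' [s1 [j1 [T1 [F1 ->]]]] [s2 [j2 [T2 [F2 ->]]]].
    assert (s1 = s2) by (eapply U; eauto). subst.
    f_equal. eapply Hf; eauto.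
  - intros s' i d [s [j [HT [HF ->]]]].
    destruct (Hc s j (ondir phi j d) HT) as [k Hk].
    exists (onpos phi k), (s ++ [existT _ j (ondir phi j d)]), k.
    split; [exact Hk|split; [|reflexivity]].
    apply Forall2_app; [exact HF|]. constructor; [|constructor].
    exists d. split; reflexivity.
  - intros s' y k [s [j [HT [HF Hk]]]].
    apply Forall2_app_inv_r in HF as [l1 [l2 [F1 [F2 ->]]]].
    inversion F2 as [|x y0 m m' R N]; subst. inversion N; subst.
    exists l1, (projT1 x). split; [eapply Hp; eauto|split; [exact F1|]].
    destruct R as [e [-> _]]. reflexivity.
Qed.

Lemma relab_back {p q : poly} (phi : pmor p q) (T : ptree p) (s' : list (step q)) :
  (exists j', relab_pred phi T s' j') ->
  exists s, (exists i, proj1_sig T s i) /\ Forall2 (rel_step phi) s s'.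
Proof.
  intros [j' [s [j [HT [HF _]]]]]. exists s. split; [exists j|]; assumption.
Qed.

Definition cmap {p q : poly} (phi : pmor p q) : pmor (cofree p) (cofree q) :=
  @PMor (cofree p) (cofree q)
    (fun T => exist _ (relab_pred phi T) (relab_wf phi T))
    (fun T a =>
       let w := constructive_indefinite_description _
                  (relab_back phi T (proj1_sig a) (proj2_sig a)) in
       exist (fun s => exists i, proj1_sig T s i) (proj1_sig w) (proj1 (proj2_sig w))).

Definition st1 {p q : poly} (x : step (tens p q)) : step p :=
  existT _ (fst (projT1 x)) (fst (projT2 x)).
Definition st2 {p q : poly} (x : step (tens p q)) : step q :=
  existT _ (snd (projT1 x)) (snd (projT2 x)).

Definition zip_pred {p q : poly} (T : ptree p) (U : ptree q)
  : list (step (tens p q)) -> pos (tens p q) -> Prop :=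
  fun s ij => proj1_sig T (map st1 s) (fst ij) /\ proj1_sig U (map st2 s) (snd ij).

Lemma zip_wf {p q : poly} (T : ptree p) (U : ptree q) : is_ptree (tens p q) (zip_pred T U).
Proof.
  destruct T as [T [Hr [Hf [Hc Hp]]]], U as [U [Hr' [Hf' [Hc' Hp']]]].
  unfold zip_pred; simpl. split; [|split; [|split]].
  - destruct Hr as [i Hi], Hr' as [j Hj]. exists (i, j). simpl. auto.
  - intros s [i j] [i' j'] [H1 H2] [H3 H4]; simpl in *.
    f_equal; [eapply Hf|eapply Hf']; eauto.
  - intros s [i j] [d e] [H1 H2]; simpl in *.
    destruct (Hc _ _ d H1) as [k Hk], (Hc' _ _ e H2) as [k' Hk'].
    exists (k, k'). rewrite !map_app. simpl. auto.
  - intros s x [i j] [H1 H2]; simpl in *. rewrite map_app in H1, H2.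
    split; [apply (Hp _ _ _ H1)|apply (Hp' _ _ _ H2)].
Qed.

Lemma zip_v1 {p q : poly} (T : ptree p) (U : ptree q) (s : list (step (tens p q))) :
  (exists ij, zip_pred T U s ij) -> exists i, proj1_sig T (map st1 s) i.
Proof. intros [ij [H _]]. eauto. Qed.
Lemma zip_v2 {p q : poly} (T : ptree p) (U : ptree q) (s : list (step (tens p q))) :
  (exists ij, zip_pred T U s ij) -> exists j, proj1_sig U (map st2 s) j.
Proof. intros [ij [_ H]]. eauto. Qed.

Definition lax (p q : poly) : pmor (tens (cofree p) (cofree q)) (cofree (tens p q)) :=
  @PMor (tens (cofree p) (cofree q)) (cofree (tens p q))
    (fun TU => exist _ (zip_pred (fst TU) (snd TU)) (zip_wf (fst TU) (snd TU)))
    (fun TU a =>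
       (exist (fun s => exists i, proj1_sig (fst TU) s i) (map st1 (proj1_sig a))
              (zip_v1 (fst TU) (snd TU) _ (proj2_sig a)),
        exist (fun s => exists i, proj1_sig (snd TU) s i) (map st2 (proj1_sig a))
              (zip_v2 (fst TU) (snd TU) _ (proj2_sig a)))).

Definition h (t : poly) (A B : Type) : poly := ihom (lin A) (tri t (lin B)).

(* Poly-enriched composition h_{A,B} (x) h_{B,C} -> h_{A,C}, the curry of
   (h_AB (x) h_BC) (x) Ay -> (h_AB (x) Ay) (x) h_BC
     -> (t <| By) (x) (y <| h_BC)                 [evaluation, unitor]
     -> (t (x) y) <| (By (x) h_BC)                [duoidal map]
     -> t <| (By (x) h_BC) -> t <| (t <| Cy)      [unitor, evaluation]
     -> (t <| t) <| Cy -> t <| Cy                 [associator, mu]      *)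
Definition hcomp (t : poly) (mu : pmor (tri t t) t) (A B C : Type)
  : pmor (tens (h t A B) (h t B C)) (h t A C) :=
  curry
   (pcomp (tri_map mu (pid (lin C)))
   (pcomp (assocI t t (lin C))
   (pcomp (tri_map (pid t) (pcomp (ev (lin B) (tri t (lin C))) (tsym (lin B) (h t B C))))
   (pcomp (tri_map (runit t) (pid (tens (lin B) (h t B C))))
   (pcomp (duo t (lin B) yy (h t B C))
   (pcomp (tens_map (ev (lin A) (tri t (lin B))) (lamI (h t B C)))
          (rearr (h t A B) (h t B C) (lin A)))))))).

Definition dcomp (t : poly) (mu : pmor (tri t t) t) (A B C : Type)
  : pmor (tens (cofree (h t A B)) (cofree (h t B C))) (cofree (h t A C)) :=
  pcomp (cmap (hcomp t mu A B C)) (lax (h t A B) (h t B C)).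

From Stdlib Require Import List ProofIrrelevance FunctionalExtensionality
  ClassicalEpsilon Eqdep PropExtensionality.
Import ListNotations.

(* The proof rests on the universal property of the cofree comonoid c_p:
   for a comonoid v, composing with the root map rt : c_p -> p is a
   bijection from cofunctors v -> c_p to Poly-maps v -> p.  We prove it by
   presenting every comonoid as a category (objects X, morphisms D x out of
   x) and unfolding a map phi into the tree of behaviours of each object.

   The injections are the constant trees at the pure points a |-> eta(inl a)
   and b |-> eta(inr b) of h_{A,A+B} and h_{B,A+B}.  By the left unit law of
   the monad, Dyn_t-composing with the constant tree at a pure point sg is
   relabelling along the restriction h_{A',C} -> h_{A,C}, psi |-> psi o sg.
   Since relabelling commutes with rt, the coproduct conditions on a
   cofunctor k become conditions on its root labels rt o k, and these are
   solved uniquely because restriction along inl and inr exhibits h_{A+B,C}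
   as the product of h_{A,C} and h_{B,C}. *)

(* Equal morphisms act equally on directions, even when these are only
   heterogeneously equal (they live over the image positions). *)
Lemma pmor_ondir_het {p q : poly} (F G : pmor p q) : F = G ->
  forall i (w1 : dir q (onpos F i)) (w2 : dir q (onpos G i)),
  existT (dir q) _ w1 = existT (dir q) _ w2 -> ondir F i w1 = ondir G i w2.
Proof.
  intros E; destruct E; intros i w1 w2 H. apply inj_pair2 in H. now subst.
Qed.

Lemma pmor_ext {p q : poly} (F G : pmor p q) (Hpos : forall i, onpos F i = onpos G i)
  (Hdir : forall i (w1 : dir q (onpos F i)) (w2 : dir q (onpos G i)),
     existT (dir q) _ w1 = existT (dir q) _ w2 -> ondir F i w1 = ondir G i w2) : F = G.
Proof.
  destruct F as [f fd], G as [g gd]; simpl in *.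
  assert (f = g) by (apply functional_extensionality; exact Hpos). subst g.
  f_equal. apply functional_extensionality_dep; intro i.
  apply functional_extensionality; intro d. apply Hdir. reflexivity.
Qed.

Lemma existT_transport {Z} (P : Z -> Type) (z1 z2 : Z) (E : z1 = z2) (w : P z1) :
  existT P z1 w = existT P z2 (eq_rect z1 P w z2 E).
Proof. now destruct E. Qed.

Lemma existT_cast {Z} (P : Z -> Type) (z1 z2 : Z) (E : z2 = z1) (w1 : P z1) (w2 : P z2) :
  existT P z1 w1 = existT P z2 w2 -> w1 = eq_rect z2 P w2 z1 E.
Proof. destruct E. intro H. now apply inj_pair2 in H. Qed.

Lemma ptree_ext {p : poly} (T U : ptree p) :
  (forall s i, proj1_sig T s i <-> proj1_sig U s i) -> T = U.
Proof.
  destruct T as [T HT], U as [U HU]; simpl; intro H.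
  assert (T = U) by (apply functional_extensionality; intro s;
    apply functional_extensionality; intro i; apply propositional_extensionality; apply H).
  subst U. f_equal. apply proof_irrelevance.
Qed.

Lemma tvertex_ext {p : poly} (T : ptree p) (a b : tvertex p T) :
  proj1_sig a = proj1_sig b -> a = b.
Proof. destruct a, b; simpl; intro; subst; f_equal; apply proof_irrelevance. Qed.

Lemma tvertex_path_het {p : poly} (T U : ptree p) (a : tvertex p T) (b : tvertex p U) :
  existT (dir (cofree p)) T a = existT (dir (cofree p)) U b -> proj1_sig a = proj1_sig b.
Proof. intro H. exact (f_equal (fun z : sigT (tvertex p) => proj1_sig (projT2 z)) H). Qed.

Lemma tri_cofree_paths_het {p : poly} (z1 z2 : pos (tri (cofree p) (cofree p)))
  (w1 : dir (tri (cofree p) (cofree p)) z1) (w2 : dir (tri (cofree p) (cofree p)) z2) :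
  existT _ z1 w1 = existT _ z2 w2 ->
  proj1_sig (projT1 w1) = proj1_sig (projT1 w2) /\
  proj1_sig (projT2 w1) = proj1_sig (projT2 w2).
Proof.
  intro H. assert (z1 = z2) by exact (f_equal (@projT1 _ _) H). subst z2.
  apply inj_pair2 in H. now subst.
Qed.

Lemma tri_cofree_dir_het {p : poly} (T : ptree p) (S1 S2 : tvertex p T -> ptree p)
  (a : tvertex p T) (b1 : tvertex p (S1 a)) (b2 : tvertex p (S2 a)) :
  S1 = S2 -> proj1_sig b1 = proj1_sig b2 ->
  existT (dir (tri (cofree p) (cofree p)))
    (existT (fun T => tvertex p T -> ptree p) T S1) (existT _ a b1) =
  existT (dir (tri (cofree p) (cofree p)))
    (existT (fun T => tvertex p T -> ptree p) T S2) (existT _ a b2).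
Proof. intros E H. subst S2. f_equal. f_equal. now apply tvertex_ext. Qed.

Lemma ptree_functional {p : poly} (T : ptree p) s i i' :
  proj1_sig T s i -> proj1_sig T s i' -> i = i'.
Proof. destruct T as [T [Hr [Hf Hc]]]; apply Hf. Qed.

Lemma ptree_parent {p : poly} (T : ptree p) s x j :
  proj1_sig T (s ++ [x]) j -> proj1_sig T s (projT1 x).
Proof. destruct T as [T [Hr [Hf [Hc Hp]]]]; apply Hp. Qed.

Lemma ptree_prefix {p : poly} (T : ptree p) s u j :
  proj1_sig T (s ++ u) j -> exists i, proj1_sig T s i.
Proof.
  revert j. induction u as [|x u IH] using rev_ind; intros j H.
  - rewrite app_nil_r in H; eauto.
  - rewrite app_assoc in H. apply ptree_parent in H. eauto.
Qed.

Definition rootl {p : poly} (T : ptree p) : pos p :=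
  proj1_sig (constructive_indefinite_description _ (proj1 (proj2_sig T))).

Lemma rootl_spec {p : poly} (T : ptree p) : proj1_sig T nil (rootl T).
Proof. unfold rootl. exact (proj2_sig (constructive_indefinite_description _ _)). Qed.

Lemma ptree_root {p : poly} (T : ptree p) i : proj1_sig T nil i -> i = rootl T.
Proof. intro H. eapply ptree_functional; [exact H|apply rootl_spec]. Qed.

Lemma ptree_first_label {p : poly} (T : ptree p) st s j :
  proj1_sig T (st :: s) j -> projT1 st = rootl T.
Proof.
  intro H. change (st :: s) with ([st] ++ s) in H.
  apply ptree_prefix in H as [i H]. change [st] with ([] ++ [st]) in H.
  apply ptree_parent in H. now apply ptree_root.
Qed.

Lemma root_child {p : poly} (T : ptree p) (d : dir p (rootl T)) :
  exists j, proj1_sig T [existT _ (rootl T) d] j.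
Proof.
  exact (proj1 (proj2 (proj2 (proj2_sig T))) nil (rootl T) d (rootl_spec T)).
Qed.

Definition rt (p : poly) : pmor (cofree p) p :=
  @PMor (cofree p) p rootl (fun T d => exist _ [existT _ (rootl T) d] (root_child T d)).

(** * Comonoids as categories *)

(* The comonoid presented by a category: objects X, morphisms D x out of x,
   identities idm, codomains cod and composition comp. *)
Definition cat_comon (X : Type) (D : X -> Type) (idm : forall x, D x)
  (cod : forall x, D x -> X) (comp : forall x (d : D x), D (cod x d) -> D x) : comon :=
  Comon (Poly X D) (@PMor (Poly X D) yy (fun _ => tt) (fun x _ => idm x))
    (@PMor (Poly X D) (tri (Poly X D) (Poly X D))
       (fun x => existT (fun y : X => D y -> X) x (cod x))
       (fun x w => comp x (projT1 w) (projT2 w))).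

(* Every comonoid is of this form: the right counit law forces the first
   component of the comultiplication to be the identity on positions. *)
Lemma comonoid_is_cat (v : comon) : is_comonoid v ->
  exists X D idm cod comp, v = cat_comon X D idm cod comp.
Proof.
  destruct v as [[X D] [ep ed] [dp dd]]. intros [_ [Hright _]].
  assert (Hs : forall x, projT1 (dp x) = x).
  { intro x. exact (f_equal (fun M : pmor (Poly X D) (tri (Poly X D) yy) =>
                               projT1 (onpos M x)) Hright). }
  set (cod := fun x => eq_rect (projT1 (dp x)) (fun y => D y -> X) (projT2 (dp x)) x (Hs x)).
  assert (Hdp : forall x, dp x = existT (fun y => D y -> X) x (cod x)).
  { intro x. unfold cod. generalize (Hs x). destruct (dp x) as [y c]. simpl.
    now intros []. }
  exists X, D, (fun x => ed x tt), cod.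
  exists (fun x d e => dd x (eq_rect _ (dir (tri (Poly X D) (Poly X D)))
                               (existT _ d e) _ (eq_sym (Hdp x)))).
  unfold cat_comon. f_equal.
  - assert (ep = fun _ => tt) by (apply functional_extensionality; intro x;
      now destruct (ep x)).
    subst ep. f_equal. apply functional_extensionality_dep; intro x.
    apply functional_extensionality; now intros [].
  - apply pmor_ext; [exact Hdp|]. intros x w1 w2 E. simpl. f_equal. simpl in w1, w2.
    replace (existT _ (projT1 w2) (projT2 w2)) with w2 by (now destruct w2).
    apply existT_cast. exact E.
Qed.

Section CategoryLaws.
Variables (X : Type) (D : X -> Type) (idm : forall x, D x) (cod : forall x, D x -> X)
  (comp : forall x (d : D x), D (cod x d) -> D x).
Hypothesis Hcat : is_comonoid (cat_comon X D idm cod comp).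

Lemma cat_cod_id x : cod x (idm x) = x.
Proof.
  destruct Hcat as [H _].
  apply (f_equal (fun M : pmor (Poly X D) (tri yy (Poly X D)) => onpos M x)) in H.
  simpl in H. apply inj_pair2 in H. exact (f_equal (fun f => f tt) H).
Qed.

Lemma cat_cod_comp x d e : cod x (comp x d e) = cod (cod x d) e.
Proof.
  destruct Hcat as [_ [_ H]].
  apply (f_equal (fun M : pmor (Poly X D)
    (tri (Poly X D) (tri (Poly X D) (Poly X D))) => onpos M x)) in H.
  simpl in H. apply inj_pair2 in H.
  apply (f_equal (fun f => f d)) in H. apply inj_pair2 in H.
  exact (f_equal (fun f => f e) H).
Qed.

Lemma cat_comp_id_l x (m : D (cod x (idm x))) (m' : D x) :
  existT D _ m = existT D _ m' -> comp x (idm x) m = m'.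
Proof.
  intro H. destruct Hcat as [Hleft _].
  refine (pmor_ondir_het _ _ Hleft x (existT _ tt m) (existT _ tt m') _).
  simpl. revert m H. generalize (cod x (idm x)) as a. intros a m H.
  assert (a = x) by exact (f_equal (@projT1 _ _) H). subst a.
  apply inj_pair2 in H. now subst.
Qed.

Lemma cat_comp_id_r x d : comp x d (idm (cod x d)) = d.
Proof.
  destruct Hcat as [_ [H _]].
  exact (pmor_ondir_het _ _ H x (existT _ d tt) (existT _ d tt) eq_refl).
Qed.

Lemma two_step_dir_het (x : X) (c : D x -> X) (K K' : forall d : D x, D (c d) -> X) :
  K = K' -> forall d e (f1 : D (K d e)) (f2 : D (K' d e)),
  existT D _ f1 = existT D _ f2 ->
  existT (dir (tri (Poly X D) (tri (Poly X D) (Poly X D))))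
    (existT _ x (fun d0 => existT (fun j : X => D j -> X) (c d0) (K d0)))
    (existT _ d (existT _ e f1)) =
  existT (dir (tri (Poly X D) (tri (Poly X D) (Poly X D))))
    (existT _ x (fun d0 => existT (fun j : X => D j -> X) (c d0) (K' d0)))
    (existT _ d (existT _ e f2)).
Proof. intros <- d e f1 f2 H. apply inj_pair2 in H. now subst. Qed.

Lemma cat_comp_assoc x d e (f1 : D (cod x (comp x d e))) (f2 : D (cod (cod x d) e)) :
  existT D _ f1 = existT D _ f2 ->
  comp x (comp x d e) f1 = comp x d (comp (cod x d) e f2).
Proof.
  intro H. pose proof Hcat as [_ [_ Hassoc]].
  refine (pmor_ondir_het _ _ Hassoc x (existT _ d (existT _ e f1))
                                       (existT _ d (existT _ e f2)) _).
  apply (two_step_dir_het x (cod x) (fun d e => cod x (comp x d e))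
                          (fun d e => cod (cod x d) e)); [|exact H].
  apply functional_extensionality_dep; intro d'.
  apply functional_extensionality; intro e'. apply cat_cod_comp.
Qed.
End CategoryLaws.
Arguments cat_cod_id {X D idm cod comp} Hcat x.
Arguments cat_cod_comp {X D idm cod comp} Hcat x d e.
Arguments cat_comp_id_l {X D idm cod comp} Hcat x m m'.
Arguments cat_comp_id_r {X D idm cod comp} Hcat x d.
Arguments cat_comp_assoc {X D idm cod comp} Hcat x d e f1 f2.

(** * The universal property of the cofree comonoid *)

Section Unfolding.
Variables (X : Type) (D : X -> Type) (idm : forall x, D x) (cod : forall x, D x -> X)
  (comp : forall x (d : D x), D (cod x d) -> D x).
Hypothesis Hcat : is_comonoid (cat_comon X D idm cod comp).
Variables (p : poly) (phi : pmor (Poly X D) p).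

Inductive behaviour : X -> list (step p) -> pos p -> Prop :=
| behaviour_root x : behaviour x nil (onpos phi x)
| behaviour_step x d s j : behaviour (cod x (ondir phi x d)) s j ->
    behaviour x (existT _ (onpos phi x) d :: s) j.

Lemma behaviour_cons_inv x st s j : behaviour x (st :: s) j ->
  exists d, st = existT _ (onpos phi x) d /\ behaviour (cod x (ondir phi x d)) s j.
Proof. intro H. inversion H; subst. eauto. Qed.

Lemma behaviour_nil_inv x j : behaviour x nil j -> j = onpos phi x.
Proof. intro H. now inversion H. Qed.

Lemma behaviour_wf x : is_ptree p (behaviour x).
Proof.
  split; [|split; [|split]].
  - exists (onpos phi x). constructor.
  - intros s i i' H. revert i'. induction H; intros i' H'.
    + now inversion H'.
    + apply behaviour_cons_inv in H' as [d' [E H']]. apply inj_pair2 in E.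
      subst d'. auto.
  - intros s i d H. revert d. induction H; intro d0.
    + exists (onpos phi (cod x (ondir phi x d0))). simpl.
      apply behaviour_step. constructor.
    + destruct (IHbehaviour d0) as [j' Hj]. exists j'. simpl. now constructor.
  - intros s. revert x. induction s as [|st s IH]; intros x y j H; simpl in H.
    + apply behaviour_cons_inv in H as [d [-> _]]. constructor.
    + apply behaviour_cons_inv in H as [d [-> H]]. constructor. eapply IH. exact H.
Qed.

(* The morphism out of x traced by a path of labels: the composite of the
   morphisms chosen at each step (paths that leave the tree give identities). *)
Fixpoint trace (s : list (step p)) : forall x, D x :=
  match s with
  | nil => fun x => idm x
  | st :: s' => fun x =>
     match excluded_middle_informative (projT1 st = onpos phi x) with
     | left H => let m := ondir phi x (eq_rect _ (dir p) (projT2 st) _ H) in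
                 comp x m (trace s' (cod x m))
     | right _ => idm x
     end
  end.

Lemma trace_cons x d s :
  trace (existT _ (onpos phi x) d :: s) x =
  comp x (ondir phi x d) (trace s (cod x (ondir phi x d))).
Proof.
  simpl. destruct excluded_middle_informative as [H|H]; [|congruence].
  now rewrite (proof_irrelevance _ H eq_refl).
Qed.

Lemma trace_het s x y : x = y -> existT D x (trace s x) = existT D y (trace s y).
Proof. now intros <-. Qed.

Definition unfold : pmor (Poly X D) (cofree p) :=
  @PMor (Poly X D) (cofree p) (fun x => exist _ (behaviour x) (behaviour_wf x))
    (fun x a => trace (proj1_sig a) x).

Lemma behaviour_subtree s x i : behaviour x s i -> forall u j,
  behaviour x (s ++ u) j <-> behaviour (cod x (trace s x)) u j.
Proof.
  revert x i. induction s as [|st s IH]; intros x i H u j.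
  - simpl. now rewrite (cat_cod_id Hcat).
  - apply behaviour_cons_inv in H as [d [-> H]]. rewrite trace_cons.
    rewrite (cat_cod_comp Hcat), <- (IH _ _ H). simpl. split; intro H'.
    + apply behaviour_cons_inv in H' as [d' [E H']]. apply inj_pair2 in E.
      now subst.
    + now constructor.
Qed.

Lemma trace_app a x i : behaviour x a i -> forall b,
  trace (a ++ b) x = comp x (trace a x) (trace b (cod x (trace a x))).
Proof.
  revert x i. induction a as [|st a IH]; intros x i H b.
  - simpl. symmetry. apply (cat_comp_id_l Hcat).
    apply trace_het. apply (cat_cod_id Hcat).
  - apply behaviour_cons_inv in H as [d [-> H]]. simpl (_ ++ _).
    rewrite !trace_cons, (IH _ _ H). symmetry.
    apply (cat_comp_assoc Hcat). apply trace_het.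
    apply (cat_cod_comp Hcat).
Qed.

Lemma unfold_cofunctor :
  is_cofunctor (cat_comon X D idm cod comp) (cofreeC p) unfold.
Proof.
  split; [reflexivity|]. apply pmor_ext.
  - intro x. simpl. f_equal. apply functional_extensionality. intros [s [i Hi]].
    apply ptree_ext. intros u j. exact (behaviour_subtree s x i Hi u j).
  - intros x w1 w2 E. apply tri_cofree_paths_het in E as [E1 E2].
    destruct w1 as [[a [i Hi]] [b Hb]], w2 as [[a2 Ha2] [b2 Hb2]]. simpl in *.
    subst a2 b2. exact (trace_app a x i Hi _).
Qed.

Lemma rt_unfold : pcomp (rt p) unfold = phi.
Proof.
  apply pmor_ext.
  - intro x. simpl. symmetry. apply ptree_root. simpl. constructor.
  - intros x w1 w2 E.
    change (trace [existT (dir p) _ w1] x = ondir phi x w2).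
    rewrite E, trace_cons. simpl. apply (cat_comp_id_r Hcat).
Qed.

End Unfolding.
Arguments behaviour {X D} cod {p} phi.
Arguments trace {X D} idm cod comp {p} phi s x.
Arguments trace_cons {X D} idm cod comp {p} phi x d s.
Arguments unfold {X D} idm cod comp {p} phi.
Arguments unfold_cofunctor {X D idm cod comp} Hcat {p} phi.
Arguments rt_unfold {X D idm cod comp} Hcat {p} phi.

Section UniqueUnfolding.
Variables (X : Type) (D : X -> Type) (idm : forall x, D x) (cod : forall x, D x -> X)
  (comp : forall x (d : D x), D (cod x d) -> D x).
Hypothesis Hcat : is_comonoid (cat_comon X D idm cod comp).
Variables (p : poly) (F : pmor (Poly X D) (cofree p)).
Hypothesis HF : is_cofunctor (cat_comon X D idm cod comp) (cofreeC p) F.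

Lemma cofunctor_subtree x (a : tvertex p (onpos F x)) :
  subtree p (onpos F x) a = onpos F (cod x (ondir F x a)).
Proof.
  destruct HF as [_ Hd].
  pose proof (f_equal (fun M : pmor (Poly X D) (tri (cofree p) (cofree p)) =>
                         onpos M x) Hd) as H.
  simpl in H. apply inj_pair2 in H. exact (f_equal (fun f => f a) H).
Qed.

Lemma cofunctor_dir_app x (a : tvertex p (onpos F x))
  (b : tvertex p (subtree p (onpos F x) a))
  (b' : tvertex p (onpos F (cod x (ondir F x a)))) : proj1_sig b = proj1_sig b' ->
  ondir F x (exist _ (proj1_sig a ++ proj1_sig b) (proj2_sig b)) =
  comp x (ondir F x a) (ondir F _ b').
Proof.
  intro Hb. pose proof HF as [_ Hd].
  refine (pmor_ondir_het _ _ Hd x (existT _ a b) (existT _ a b') _).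
  apply tri_cofree_dir_het; [|exact Hb].
  apply functional_extensionality. exact (cofunctor_subtree x).
Qed.

Lemma cofunctor_tree s x j :
  proj1_sig (onpos F x) s j <-> behaviour cod (pcomp (rt p) F) x s j.
Proof.
  revert x j. induction s as [|st s IH]; intros x j; split; intro H.
  - apply ptree_root in H as ->. constructor.
  - apply behaviour_nil_inv in H as ->. apply rootl_spec.
  - pose proof (ptree_first_label _ _ _ _ H) as Hr. destruct st as [r d].
    simpl in Hr. subst r. apply behaviour_step, IH.
    change (proj1_sig (onpos F (cod x (ondir F x (ondir (rt p) (onpos F x) d)))) s j).
    now rewrite <- cofunctor_subtree.
  - apply behaviour_cons_inv in H as [d [-> H]]. apply IH in H.
    change (proj1_sig (onpos F (cod x (ondir F x (ondir (rt p) (onpos F x) d)))) s j) in H.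
    now rewrite <- cofunctor_subtree in H.
Qed.

Lemma cofunctor_trace s x (a : tvertex p (onpos F x)) :
  proj1_sig a = s -> ondir F x a = trace idm cod comp (pcomp (rt p) F) s x.
Proof.
  revert x a. induction s as [|st s IH]; intros x a Ha.
  - pose proof HF as [He _]. pose proof (pmor_ondir_het _ _ He x tt tt eq_refl) as H.
    simpl in H |- *. rewrite <- H. f_equal. now apply tvertex_ext.
  - destruct a as [l [j Hj]]. simpl in Ha. subst l.
    pose proof (ptree_first_label _ _ _ _ Hj) as Hr. destruct st as [r d].
    simpl in Hr. subst r.
    etransitivity; [|symmetry; exact (trace_cons idm cod comp (pcomp (rt p) F) x d s)].
    set (a1 := ondir (rt p) (onpos F x) d).
    assert (Hb : exists i, proj1_sig (subtree p (onpos F x) a1) s i) by (exists j; exact Hj).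
    assert (Hb' : exists i, proj1_sig (onpos F (cod x (ondir F x a1))) s i)
      by (rewrite <- cofunctor_subtree; exact Hb).
    pose proof (cofunctor_dir_app x a1 (exist _ s Hb) (exist _ s Hb') eq_refl) as E.
    rewrite (IH _ (exist _ s Hb') eq_refl) in E.
    etransitivity; [|exact E]. f_equal. now apply tvertex_ext.
Qed.

Lemma cofunctor_is_unfold : F = unfold idm cod comp (pcomp (rt p) F).
Proof.
  apply pmor_ext.
  - intro x. apply ptree_ext. intros s j. apply cofunctor_tree.
  - intros x w1 w2 E. apply tvertex_path_het in E. now apply cofunctor_trace.
Qed.

End UniqueUnfolding.
Arguments cofunctor_is_unfold {X D idm cod comp p} F HF.

Lemma cofree_lift (v : comon) (p : poly) : is_comonoid v ->
  forall phi : pmor (carrier v) p,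
  exists F, is_cofunctor v (cofreeC p) F /\ pcomp (rt p) F = phi.
Proof.
  intros Hv phi. destruct (comonoid_is_cat v Hv) as [X [D [idm [cod [comp ->]]]]].
  exists (unfold idm cod comp phi).
  split; [apply unfold_cofunctor | apply rt_unfold]; exact Hv.
Qed.

Lemma cofree_ext (v : comon) (p : poly) (F G : pmor (carrier v) (cofree p)) :
  is_comonoid v -> is_cofunctor v (cofreeC p) F -> is_cofunctor v (cofreeC p) G ->
  pcomp (rt p) F = pcomp (rt p) G -> F = G.
Proof.
  intros Hv HF HG E. destruct (comonoid_is_cat v Hv) as [X [D [idm [cod [comp ->]]]]].
  rewrite (cofunctor_is_unfold F HF), (cofunctor_is_unfold G HG).
  f_equal. exact E.
Qed.

(** * Functoriality of the cofree comonoid *)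

Lemma cofunctor_comp (a b c : comon) F G :
  is_cofunctor a b F -> is_cofunctor b c G -> is_cofunctor a c (pcomp G F).
Proof.
  intros [F1 F2] [G1 G2]. split.
  - change (pcomp (pcomp (eps c) G) F = eps a). now rewrite G1.
  - change (pcomp (pcomp (dlt c) G) F =
            pcomp (tri_map (pcomp G F) (pcomp G F)) (dlt a)).
    rewrite G2.
    change (pcomp (tri_map G G) (pcomp (dlt b) F) =
            pcomp (tri_map (pcomp G F) (pcomp G F)) (dlt a)).
    now rewrite F2.
Qed.

Lemma cmap_dir_spec {p q : poly} (phi : pmor p q) (T : ptree p)
  (a : tvertex q (onpos (cmap phi) T)) :
  (exists i, proj1_sig T (proj1_sig (ondir (cmap phi) T a)) i) /\
  Forall2 (rel_step phi) (proj1_sig (ondir (cmap phi) T a)) (proj1_sig a).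
Proof.
  simpl. destruct (constructive_indefinite_description _ _) as [w [H1 H2]]. simpl. auto.
Qed.

Lemma relab_path_unique {p q : poly} (phi : pmor p q) (T : ptree p) s' s1 s2 :
  (exists i, proj1_sig T s1 i) -> (exists i, proj1_sig T s2 i) ->
  Forall2 (rel_step phi) s1 s' -> Forall2 (rel_step phi) s2 s' -> s1 = s2.
Proof. intros [i1 H1] [i2 H2]. eapply relab_addr_uniq; eauto. Qed.

Lemma relab_subtree {p q : poly} (phi : pmor p q) (T : ptree p) b a :
  (exists i, proj1_sig T b i) -> Forall2 (rel_step phi) b a ->
  forall u j, relab_pred phi T (a ++ u) j <->
    (exists s j0, proj1_sig T (b ++ s) j0 /\ Forall2 (rel_step phi) s u /\
                  j = onpos phi j0).
Proof.
  intros Hb Fb u j. split.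
  - intros [s [j0 [HT [HF Hj]]]].
    apply Forall2_app_inv_r in HF as [l1 [l2 [F1 [F2 ->]]]].
    assert (l1 = b) by (eapply (relab_path_unique phi T a); eauto;
                        eapply ptree_prefix; eauto).
    subst l1. exists l2, j0. auto.
  - intros [s [j0 [HT [HF Hj]]]]. exists (b ++ s), j0.
    split; [exact HT|split; [now apply Forall2_app|exact Hj]].
Qed.

Lemma cmap_cofunctor {p q : poly} (phi : pmor p q) :
  is_cofunctor (cofreeC p) (cofreeC q) (cmap phi).
Proof.
  split.
  - apply pmor_ext; [reflexivity|]. intros T w1 w2 _. apply tvertex_ext.
    destruct (cmap_dir_spec phi T (exist _ nil (proj1 (proj2_sig (onpos (cmap phi) T)))))
      as [_ F]. simpl in F |- *. now inversion F.
  - apply pmor_ext.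
    + intro T. simpl. f_equal. apply functional_extensionality. intro a.
      apply ptree_ext. intros u j. simpl.
      destruct (cmap_dir_spec phi T a) as [Hb Fb].
      rewrite (relab_subtree phi T _ _ Hb Fb u j). unfold relab_pred. simpl. tauto.
    + intros T w1 w2 E. apply tri_cofree_paths_het in E as [E1 E2].
      apply tvertex_ext. set (a := projT1 w2).
      set (T' := subtree p T (ondir (cmap phi) T a)).
      destruct (cmap_dir_spec phi T a) as [Hb Fb].
      destruct (cmap_dir_spec phi T' (projT2 w2)) as [Hc Fc].
      destruct (cmap_dir_spec phi T (exist _ (proj1_sig (projT1 w1) ++ proj1_sig (projT2 w1))
                                           (proj2_sig (projT2 w1)))) as [Hbc Fbc].
      apply (relab_path_unique phi T (proj1_sig (projT1 w1) ++ proj1_sig (projT2 w1)));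
        [exact Hbc|exact Hc|exact Fbc|].
      refine (eq_ind _ (Forall2 (rel_step phi) _) (Forall2_app Fb Fc) _ _).
      f_equal; symmetry; assumption.
Qed.

Lemma rt_cmap {p q : poly} (phi : pmor p q) : pcomp (rt q) (cmap phi) = pcomp phi (rt p).
Proof.
  apply pmor_ext.
  - intro T. simpl. symmetry. apply ptree_root. simpl. exists nil, (rootl T).
    split; [apply rootl_spec|split; [constructor|reflexivity]].
  - intros T w1 w2 E. apply tvertex_ext.
    destruct (cmap_dir_spec phi T (ondir (rt q) (onpos (cmap phi) T) w1)) as [Hb Fb].
    simpl in Fb |- *.
    apply (relab_path_unique phi T [existT _ (onpos phi (rootl T)) w2]);
      [exact Hb|apply root_child| |].
    + refine (eq_ind _ (Forall2 (rel_step phi) _) Fb _ _). now f_equal.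
    + constructor; [|constructor]. exists w2. split; reflexivity.
Qed.

Lemma rt_relabel {V p q : poly} (phi : pmor p q) (k : pmor V (cofree p)) :
  pcomp (rt q) (pcomp (cmap phi) k) = pcomp phi (pcomp (rt p) k).
Proof.
  change (pcomp (pcomp (rt q) (cmap phi)) k = pcomp phi (pcomp (rt p) k)).
  now rewrite rt_cmap.
Qed.

Lemma relabel_cofunctor (v : comon) {p q : poly} (phi : pmor p q)
  (k : pmor (carrier v) (cofree p)) :
  is_cofunctor v (cofreeC p) k -> is_cofunctor v (cofreeC q) (pcomp (cmap phi) k).
Proof. intro Hk. exact (cofunctor_comp _ _ _ _ _ Hk (cmap_cofunctor phi)). Qed.

(** * Composing with pure points in Dyn_t *)

(* The left unit law mu o (eta <| t) = id of a monad, the only monad law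
   the construction needs. *)
Definition monad_left_unit (t : poly) (eta : pmor yy t) (mu : pmor (tri t t) t) : Prop :=
  pcomp mu (pcomp (tri_map eta (pid t)) (lamI t)) = pid t.

Lemma monad_left_unit_of_monad t eta mu : is_monad t eta mu -> monad_left_unit t eta mu.
Proof. now intros [H _]. Qed.

Lemma pmor_lin_ext {A : Type} {Q : poly} (f g : pmor (lin A) Q) :
  (forall a, onpos f a = onpos g a) -> f = g.
Proof.
  destruct f as [f fd], g as [g gd]; simpl; intro H.
  assert (f = g) by (apply functional_extensionality; exact H). subst g. f_equal.
  apply functional_extensionality_dep; intro a. apply functional_extensionality; intro w.
  now destruct (fd a w), (gd a w).
Qed.

Lemma h_dir_het {t : poly} {A C : Type} (psi1 psi2 : pos (h t A C))
  (w1 : dir (h t A C) psi1) (w2 : dir (h t A C) psi2) :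
  existT _ psi1 w1 = existT _ psi2 w2 ->
  projT1 w1 = projT1 w2 /\
  existT (dir (tri t (lin C))) (onpos psi1 (projT1 w1)) (projT2 w1) =
  existT (dir (tri t (lin C))) (onpos psi2 (projT1 w2)) (projT2 w2).
Proof.
  intro E. split.
  - exact (f_equal (fun z : sigT (dir (h t A C)) => projT1 (projT2 z)) E).
  - exact (f_equal (fun z : sigT (dir (h t A C)) =>
      existT (dir (tri t (lin C))) (onpos (projT1 z) (projT1 (projT2 z)))
             (projT2 (projT2 z))) E).
Qed.

Definition pure (t : poly) (eta : pmor yy t) {A A' : Type} (sg : A -> A') : pos (h t A A') :=
  @PMor (lin A) (tri t (lin A'))
    (fun a => existT (fun i => dir t i -> A') (onpos eta tt) (fun _ => sg a))
    (fun a w => tt).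

Definition restrict (t : poly) {A A' C : Type} (sg : A -> A') : pmor (h t A' C) (h t A C) :=
  @PMor (h t A' C) (h t A C)
    (fun psi => @PMor (lin A) (tri t (lin C)) (fun a => onpos psi (sg a))
                                               (fun a w => ondir psi (sg a) w))
    (fun psi w => existT _ (sg (projT1 w)) (projT2 w)).

Lemma left_unit_pointwise t eta mu : monad_left_unit t eta mu -> forall i,
  onpos mu (existT (fun i0 => dir t i0 -> pos t) (onpos eta tt) (fun _ => i)) = i /\
  forall d, existT (dir t) _ d =
    existT (dir t) i (projT2 (ondir mu (existT (fun i0 => dir t i0 -> pos t)
                                          (onpos eta tt) (fun _ => i)) d)).
Proof.
  intros Hunit i.
  assert (Ei : onpos mu (existT (fun i0 => dir t i0 -> pos t) (onpos eta tt)
                                (fun _ => i)) = i)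
    by exact (f_equal (fun M : pmor t t => onpos M i) Hunit).
  split; [exact Ei|]. intro d.
  etransitivity; [exact (existT_transport (dir t) _ _ Ei d)|]. f_equal. symmetry.
  exact (pmor_ondir_het _ _ Hunit i d _ (existT_transport (dir t) _ _ Ei d)).
Qed.

Lemma reindex_identity (t : poly) C (m : pos t) (z : {i : pos t & dir t i -> C})
  (g : dir t m -> dir t (projT1 z)) (E : m = projT1 z)
  (Hg : forall d, existT (dir t) m d = existT (dir t) (projT1 z) (g d)) :
  existT (fun i => dir t i -> C) m (fun d => projT2 z (g d)) = z /\
  forall e1 e2, existT (dir (tri t (lin C)))
                  (existT (fun i => dir t i -> C) m (fun d => projT2 z (g d))) e1
              = existT (dir (tri t (lin C))) z e2 -> g (projT1 e1) = projT1 e2.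
Proof.
  destruct z as [i c]; simpl in *. subst m.
  assert (g = fun d => d) by (apply functional_extensionality; intro d;
     pose proof (Hg d) as H; apply inj_pair2 in H; now symmetry).
  subst g. split; [reflexivity|]. intros e1 e2 H. apply inj_pair2 in H. now subst.
Qed.

Section PurePoint.
Variables (t : poly) (eta : pmor yy t) (mu : pmor (tri t t) t).
Hypothesis Hunit : monad_left_unit t eta mu.
Variables (A A' C : Type) (sg : A -> A').

Lemma hcomp_pure_pos (psi : pos (h t A' C)) :
  onpos (hcomp t mu A A' C) (pure t eta sg, psi) = onpos (restrict t sg) psi.
Proof.
  apply pmor_lin_ext. intro a. cbn.
  destruct (left_unit_pointwise t eta mu Hunit (projT1 (onpos psi (sg a)))) as [E Hg].
  exact (proj1 (reindex_identity t C _ (onpos psi (sg a)) _ E Hg)).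
Qed.

Lemma hcomp_pure_dir (psi : pos (h t A' C))
  (e1 : dir (h t A C) (onpos (hcomp t mu A A' C) (pure t eta sg, psi)))
  (e2 : dir (h t A C) (onpos (restrict t sg) psi)) :
  existT _ _ e1 = existT _ _ e2 ->
  snd (ondir (hcomp t mu A A' C) (pure t eta sg, psi) e1) = ondir (restrict t sg) psi e2.
Proof.
  intro H. apply h_dir_het in H as [Ha H2].
  destruct e1 as [a e1], e2 as [a2 e2]. simpl in Ha, H2. subst a2.
  cbn. f_equal.
  destruct (left_unit_pointwise t eta mu Hunit (projT1 (onpos psi (sg a)))) as [E Hg].
  pose proof (proj2 (reindex_identity t C _ (onpos psi (sg a)) _ E Hg) e1 e2 H2) as K.
  destruct e2 as [d2 u2]. simpl in K. rewrite K.
  change (existT (fun _ : dir t (projT1 (onpos psi (sg a))) => unit) d2 (projT2 e1) =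
          existT (fun _ : dir t (projT1 (onpos psi (sg a))) => unit) d2 u2).
  now destruct (projT2 e1), u2.
Qed.
End PurePoint.

Definition pure_tree_pred (t : poly) eta {A A'} (sg : A -> A')
  : list (step (h t A A')) -> pos (h t A A') -> Prop :=
  fun s i => i = pure t eta sg /\ Forall (fun x => projT1 x = pure t eta sg) s.

Lemma pure_tree_wf (t : poly) eta {A A'} (sg : A -> A') :
  is_ptree (h t A A') (pure_tree_pred t eta sg).
Proof.
  unfold pure_tree_pred. split; [|split; [|split]].
  - exists (pure t eta sg). auto.
  - now intros s i i' [-> _] [-> _].
  - intros s i d [-> H]. exists (pure t eta sg). split; [reflexivity|].
    apply Forall_app. split; [exact H|]. now repeat constructor.
  - intros s x j [_ H]. apply Forall_app in H as [H1 H2]. inversion H2; subst. auto.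
Qed.

Definition pure_tree (t : poly) eta {A A'} (sg : A -> A') : ptree (h t A A') :=
  exist _ (pure_tree_pred t eta sg) (pure_tree_wf t eta sg).

Definition pure_point (t : poly) eta {A A'} (sg : A -> A') : pmor yy (cofree (h t A A')) :=
  @PMor yy (cofree (h t A A')) (fun _ => pure_tree t eta sg) (fun _ _ => tt).

(* The pure point is a cofunctor: every subtree of a constant tree is the
   same constant tree. *)
Lemma pure_point_cofunctor (t : poly) eta {A A'} (sg : A -> A') :
  is_cofunctor yyC (cofreeC (h t A A')) (pure_point t eta sg).
Proof.
  split.
  - apply pmor_ext; [now intros []|]. now intros [] [] [] _.
  - apply pmor_ext.
    + intros []. simpl. f_equal. apply functional_extensionality. intros [s [i [Hi Hs]]].
      apply ptree_ext. intros u j. simpl. unfold pure_tree_pred. rewrite Forall_app. tauto.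
    + now intros [] w1 w2 _.
Qed.

Section PurePointComposite.
Variables (t : poly) (eta : pmor yy t) (mu : pmor (tri t t) t).
Hypothesis Hunit : monad_left_unit t eta mu.
Variables (A A' C : Type) (sg : A -> A').

Let hc := hcomp t mu A A' C.
Let is_pure (x : step (tens (h t A A') (h t A' C))) : Prop := fst (projT1 x) = pure t eta sg.

Lemma rel_step_pure_restrict x (y : step (h t A C)) :
  is_pure x -> rel_step hc x y -> rel_step (restrict t (C:=C) sg) (st2 x) y.
Proof.
  destruct x as [[i psi] [d1 d2]]. unfold is_pure. intros Hi [e [Ey Ed]].
  simpl in Hi. subst i.
  exists (eq_rect _ (dir (h t A C)) e _ (hcomp_pure_pos t eta mu Hunit A A' C sg psi)).
  split.
  - rewrite Ey. apply existT_transport.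
  - apply (f_equal snd) in Ed. simpl in Ed |- *. rewrite Ed.
    apply hcomp_pure_dir; [exact Hunit|]. apply existT_transport.
Qed.

Lemma rel_step_restrict_pure (x2 : step (h t A' C)) (y : step (h t A C)) :
  rel_step (restrict t (C:=C) sg) x2 y ->
  exists x, st2 x = x2 /\ is_pure x /\ rel_step hc x y.
Proof.
  destruct x2 as [psi d2]. intros [e2 [Ey Ed]]. simpl in Ed.
  set (E := hcomp_pure_pos t eta mu Hunit A A' C sg psi).
  set (e1 := eq_rect _ (dir (h t A C)) e2 _ (eq_sym E)).
  assert (H : existT (dir (h t A C)) _ e1 = existT (dir (h t A C)) _ e2)
    by (symmetry; apply existT_transport).
  exists (existT (fun ij : pos (tens (h t A A') (h t A' C)) =>
                    dir (tens (h t A A') (h t A' C)) ij)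
            (pure t eta sg, psi) (ondir hc (pure t eta sg, psi) e1)).
  split; [|split; [reflexivity|]].
  - change (existT (dir (h t A' C)) psi (snd (ondir hc (pure t eta sg, psi) e1)) =
            existT _ psi d2).
    unfold hc. now rewrite (hcomp_pure_dir t eta mu Hunit A A' C sg psi e1 e2 H), Ed.
  - exists e1. split; [|reflexivity]. rewrite Ey. now symmetry.
Qed.

Lemma paths_pure_restrict s s' :
  Forall is_pure s -> Forall2 (rel_step hc) s s' ->
  Forall2 (rel_step (restrict t (C:=C) sg)) (map st2 s) s'.
Proof.
  intros Hs H. induction H as [|x y s s' Hxy _ IH]; simpl; constructor.
  - inversion Hs; subst. now apply rel_step_pure_restrict.
  - apply IH. now inversion Hs.
Qed.

Lemma paths_restrict_pure s2 s' :
  Forall2 (rel_step (restrict t (C:=C) sg)) s2 s' ->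
  exists s, map st2 s = s2 /\ Forall is_pure s /\ Forall2 (rel_step hc) s s'.
Proof.
  intro H. induction H as [|x y s2 s' Hxy _ [s [E [Hs HR]]]].
  - exists nil. simpl. auto.
  - destruct (rel_step_restrict_pure x y Hxy) as [z [Ez [Hz Rz]]].
    exists (z :: s). simpl. rewrite E, Ez. auto.
Qed.

Lemma zip_pure_first (T : ptree (h t A' C)) s j :
  proj1_sig (onpos (lax (h t A A') (h t A' C)) (pure_tree t eta sg, T)) s j ->
  fst j = pure t eta sg /\ Forall is_pure s /\ proj1_sig T (map st2 s) (snd j).
Proof.
  intros [[Hj Hs] HT]. simpl in Hs. repeat split; [exact Hj| |exact HT].
  rewrite Forall_map in Hs. exact Hs.
Qed.

Lemma relab_zip_pure (T : ptree (h t A' C)) s' j' :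
  relab_pred hc (onpos (lax (h t A A') (h t A' C)) (pure_tree t eta sg, T)) s' j'
  <-> relab_pred (restrict t sg) T s' j'.
Proof.
  unfold relab_pred. split.
  - intros [s [j [Hz [HF Hj]]]]. apply zip_pure_first in Hz as [Hj1 [Hs HT]].
    exists (map st2 s), (snd j). split; [exact HT|split].
    + now apply paths_pure_restrict.
    + rewrite Hj. destruct j as [j1 j2]. simpl in Hj1. subst j1.
      apply hcomp_pure_pos, Hunit.
  - intros [s2 [j2 [HT [HF Hj]]]].
    destruct (paths_restrict_pure s2 s' HF) as [s [E [Hs HR]]].
    exists s, (pure t eta sg, j2). split; [|split; [exact HR|]].
    + split; [split; [reflexivity|now apply Forall_map]|]. simpl. now rewrite E.
    + rewrite Hj. symmetry. apply hcomp_pure_pos, Hunit.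
Qed.

Lemma dcomp_pure_point V (k : pmor V (cofree (h t A' C))) :
  pcomp (dcomp t mu A A' C) (pcomp (tens_map (pure_point t eta sg) k) (unitL V)) =
  pcomp (cmap (restrict t sg)) k.
Proof.
  apply pmor_ext.
  - intro x. apply ptree_ext. intros s j. exact (relab_zip_pure (onpos k x) s j).
  - intros x w1 w2 E. apply tvertex_path_het in E.
    set (z := (pure_tree t eta sg, onpos k x)
              : pos (tens (cofree (h t A A')) (cofree (h t A' C)))).
    change (ondir k x (snd (ondir (lax (h t A A') (h t A' C)) z
              (ondir (cmap hc) (onpos (lax (h t A A') (h t A' C)) z) w1)))
            = ondir k x (ondir (cmap (restrict t sg)) (onpos k x) w2)).
    f_equal. apply tvertex_ext.
    destruct (cmap_dir_spec hc (onpos (lax (h t A A') (h t A' C)) z) w1)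
      as [[j Hb] Fb].
    destruct (cmap_dir_spec (restrict t sg) (onpos k x) w2) as [Hb2 Fb2].
    apply zip_pure_first in Hb as [_ [Hs HT]].
    apply (relab_path_unique (restrict t sg) (onpos k x) (proj1_sig w2));
      [eauto|exact Hb2| |exact Fb2].
    rewrite <- E. now apply paths_pure_restrict.
Qed.
End PurePointComposite.

(** * h_{A+B,C} is the product of h_{A,C} and h_{B,C} *)

Definition copair {V : poly} (t : poly) {A B C : Type}
  (fa : pmor V (h t A C)) (fb : pmor V (h t B C)) : pmor V (h t (A + B) C) :=
  @PMor V (h t (A + B) C)
    (fun x => @PMor (lin (A + B)) (tri t (lin C))
       (fun ab => match ab with
                  | inl a => onpos (onpos fa x) a
                  | inr b => onpos (onpos fb x) b end)
       (fun ab w => tt))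
    (fun x w => match w with
       | existT _ (inl a) e => ondir fa x (existT _ a e)
       | existT _ (inr b) e => ondir fb x (existT _ b e) end).

Lemma restrict_copair_component {V : poly} (t : poly) {A0 A B C : Type}
  (sg : A0 -> A + B) (f : pmor V (h t A0 C)) (fa : pmor V (h t A C))
  (fb : pmor V (h t B C)) :
  (forall x a0, onpos (onpos (copair t fa fb) x) (sg a0) = onpos (onpos f x) a0) ->
  (forall x a0 e1 e2, existT (dir (tri t (lin C))) _ e1 = existT _ _ e2 ->
     ondir (copair t fa fb) x (existT _ (sg a0) e1) = ondir f x (existT _ a0 e2)) ->
  pcomp (restrict t (C:=C) sg) (copair t fa fb) = f.
Proof.
  intros Hpos Hdir. apply pmor_ext.
  - intro x. apply pmor_lin_ext. exact (Hpos x).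
  - intros x [a0 e1] [a2 e2] E. apply h_dir_het in E as [Ha E]. simpl in Ha, E.
    subst a2. simpl. now apply Hdir.
Qed.

Lemma restrict_inl_copair {V : poly} (t : poly) {A B C : Type}
  (fa : pmor V (h t A C)) (fb : pmor V (h t B C)) :
  pcomp (restrict t (C:=C) (@inl A B)) (copair t fa fb) = fa.
Proof.
  apply restrict_copair_component; [reflexivity|].
  intros x a e1 e2 E. apply inj_pair2 in E. now subst.
Qed.

Lemma restrict_inr_copair {V : poly} (t : poly) {A B C : Type}
  (fa : pmor V (h t A C)) (fb : pmor V (h t B C)) :
  pcomp (restrict t (C:=C) (@inr A B)) (copair t fa fb) = fb.
Proof.
  apply restrict_copair_component; [reflexivity|].
  intros x b e1 e2 E. apply inj_pair2 in E. now subst.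
Qed.

Lemma restrict_inl_inr_injective {V : poly} (t : poly) {A B C : Type}
  (th1 th2 : pmor V (h t (A + B) C)) :
  pcomp (restrict t (C:=C) (@inl A B)) th1 = pcomp (restrict t (@inl A B)) th2 ->
  pcomp (restrict t (C:=C) (@inr A B)) th1 = pcomp (restrict t (@inr A B)) th2 ->
  th1 = th2.
Proof.
  intros HA HB.
  assert (Hpos : forall x, onpos th1 x = onpos th2 x).
  { intro x. apply pmor_lin_ext. intros [a|b].
    - exact (f_equal (fun M : pmor V (h t A C) => onpos (onpos M x) a) HA).
    - exact (f_equal (fun M : pmor V (h t B C) => onpos (onpos M x) b) HB). }
  destruct th1 as [o1 d1], th2 as [o2 d2]. simpl in Hpos.
  assert (o1 = o2) by (apply functional_extensionality; exact Hpos). subst o2.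
  f_equal. apply functional_extensionality_dep; intro x.
  apply functional_extensionality; intros [[a|b] e].
  - exact (pmor_ondir_het _ _ HA x (existT _ a e) (existT _ a e) eq_refl).
  - exact (pmor_ondir_het _ _ HB x (existT _ b e) (existT _ b e) eq_refl).
Qed.

Theorem mainTheorem3 (t : poly) (eta : pmor yy t) (mu : pmor (tri t t) t) :
  is_monad t eta mu ->
  forall A B : Type,
  exists (i : pmor yy (cofree (h t A (A + B))))
         (j : pmor yy (cofree (h t B (A + B)))),
    is_cofunctor yyC (cofreeC (h t A (A + B))) i /\
    is_cofunctor yyC (cofreeC (h t B (A + B))) j /\
    forall (C : Type) (v : comon), is_comonoid v ->
    forall (f : pmor (carrier v) (cofree (h t A C)))
           (g : pmor (carrier v) (cofree (h t B C))),
      is_cofunctor v (cofreeC (h t A C)) f ->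
      is_cofunctor v (cofreeC (h t B C)) g ->
      exists k : pmor (carrier v) (cofree (h t (A + B) C)),
        (is_cofunctor v (cofreeC (h t (A + B) C)) k /\
         pcomp (dcomp t mu A (A + B) C) (pcomp (tens_map i k) (unitL (carrier v))) = f /\
         pcomp (dcomp t mu B (A + B) C) (pcomp (tens_map j k) (unitL (carrier v))) = g) /\
        (forall k' : pmor (carrier v) (cofree (h t (A + B) C)),
           is_cofunctor v (cofreeC (h t (A + B) C)) k' ->
           pcomp (dcomp t mu A (A + B) C) (pcomp (tens_map i k') (unitL (carrier v))) = f ->
           pcomp (dcomp t mu B (A + B) C) (pcomp (tens_map j k') (unitL (carrier v))) = g ->
           k' = k).
Proof.
  intros Hm A B. pose proof (monad_left_unit_of_monad t eta mu Hm) as Hunit.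
  exists (pure_point t eta (@inl A B)), (pure_point t eta (@inr A B)).
  split; [apply pure_point_cofunctor|split; [apply pure_point_cofunctor|]].
  intros C v Hv f g Hf Hg.
  (* k is the cofunctor whose root labels pair those of f and g *)
  destruct (cofree_lift v _ Hv (copair t (pcomp (rt _) f) (pcomp (rt _) g))) as [k [Hk Rk]].
  exists k. rewrite !(dcomp_pure_point t eta mu Hunit).
  split; [split; [exact Hk|split]|].
  - apply (cofree_ext v); [exact Hv|now apply relabel_cofunctor|exact Hf|].
    rewrite rt_relabel, Rk. apply restrict_inl_copair.
  - apply (cofree_ext v); [exact Hv|now apply relabel_cofunctor|exact Hg|].
    rewrite rt_relabel, Rk. apply restrict_inr_copair.
  - intros k' Hk' Ef Eg. rewrite !(dcomp_pure_point t eta mu Hunit) in Ef, Eg.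
    apply (cofree_ext v); [exact Hv|exact Hk'|exact Hk|].
    rewrite Rk. apply restrict_inl_inr_injective.
    + rewrite restrict_inl_copair, <- rt_relabel. now rewrite Ef.
    + rewrite restrict_inr_copair, <- rt_relabel. now rewrite Eg.
Qed.
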